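(* Let $\mathcal A$ be an abelian category and let $0\to F\to M\to C\to 0$ be a fully invariant short exact sequence in $\mathcal A$. (1) $M$ is strongly self-$F$-split if and only if $M$ is self-$F$-split and the ring $\mathrm{End}_{\mathcal A}(C)$ is abelian. (2) $M$ is dual strongly self-$F$-split if and only if $M$ is dual self-$F$-split and the ring $\mathrm{End}_{\mathcal A}(F)$ is abelian.
   Context: A ring is abelian if each of its idempotents is central. Let $\mathcal A$ be an abelian category. A morphism $s:X\to Y$ is a section if $ts=1_X$ for some $t$, and a retraction if $st=1_Y$ for some $t$. A monomorphism $i:K\to M$ is fully invariant if for every morphism $h:M\to M$ there is $\alpha:K\to K$ with $hi=i\alpha$; an epimorphism $d:M\to C$ is fully coinvariant if for every $h:M\to M$ there is $\beta:C\to C$ with $dh=\beta d$. A short exact sequence $0\to F\xrightarrow{i}M\xrightarrow{d}C\to 0$ is fully invariant if $i$ is fully invariant. $M$ is self-$F$-split (resp. strongly self-$F$-split) if for every morphism $g:M\to M$, $\ker(dg)$ is a section (resp. a fully invariant section); $M$ is dual self-$F$-split (resp. dual strongly self-$F$-split) if for every morphism $g:M\to M$, $\mathrm{coker}(gi)$ is a retraction (resp. a fully coinvariant retraction). *)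

From HB Require Import structures.
From mathcomp Require Import all_boot all_algebra.
Set Implicit Arguments. Unset Strict Implicit. Unset Printing Implicit Defensive.
Import GRing.Theory.
Local Open Scope ring_scope.

Record PreAdd := {
  Obj : Type;
  Mor : Obj -> Obj -> zmodType;
  idm : forall X, Mor X X;
  comp : forall X Y Z, Mor Y Z -> Mor X Y -> Mor X Z;
  compA : forall X Y Z W (h : Mor Z W) (g : Mor Y Z) (f : Mor X Y),
      comp h (comp g f) = comp (comp h g) f;
  comp1m : forall X Y (f : Mor X Y), comp (idm Y) f = f;
  compm1 : forall X Y (f : Mor X Y), comp f (idm X) = f;
  compDl : forall X Y Z (g g' : Mor Y Z) (f : Mor X Y),
      comp (g + g') f = comp g f + comp g' f;
  compDr : forall X Y Z (g : Mor Y Z) (f f' : Mor X Y),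
      comp g (f + f') = comp g f + comp g f'
}.

Arguments idm {_} X.
Arguments comp {_ X Y Z} _ _.
Notation "g \o' f" := (comp g f) (at level 40, left associativity).

Section Notions.
Variable A : PreAdd.
Implicit Types X Y Z K W : Obj A.

Definition mono X Y (f : Mor X Y) : Prop :=
  forall W (g h : Mor W X), f \o' g = f \o' h -> g = h.
Definition epi X Y (f : Mor X Y) : Prop :=
  forall W (g h : Mor Y W), g \o' f = h \o' f -> g = h.

Definition is_kernel X Y K (f : Mor X Y) (k : Mor K X) : Prop :=
  f \o' k = 0 /\
  forall W (g : Mor W X), f \o' g = 0 -> exists! u : Mor W K, k \o' u = g.

Definition is_cokernel X Y C (f : Mor X Y) (c : Mor Y C) : Prop :=
  c \o' f = 0 /\
  forall W (g : Mor Y W), g \o' f = 0 -> exists! u : Mor C W, u \o' c = g.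

Definition is_zero_object Z : Prop :=
  (forall X (f : Mor Z X), f = 0) /\ (forall X (f : Mor X Z), f = 0).

Definition is_biproduct X Y P (i1 : Mor X P) (i2 : Mor Y P)
    (p1 : Mor P X) (p2 : Mor P Y) : Prop :=
  [/\ p1 \o' i1 = idm X, p2 \o' i2 = idm Y, p1 \o' i2 = 0, p2 \o' i1 = 0
    & i1 \o' p1 + i2 \o' p2 = idm P].

Definition section X Y (s : Mor X Y) : Prop := exists t : Mor Y X, t \o' s = idm X.
Definition retraction X Y (s : Mor X Y) : Prop := exists t : Mor Y X, s \o' t = idm Y.

Definition fully_invariant K M (i : Mor K M) : Prop :=
  mono i /\ forall h : Mor M M, exists alpha : Mor K K, h \o' i = i \o' alpha.
Definition fully_coinvariant M C (d : Mor M C) : Prop :=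
  epi d /\ forall h : Mor M M, exists beta : Mor C C, d \o' h = beta \o' d.

(* End(X) is an abelian ring: every idempotent is central
   (multiplication in End(X) is composition). *)
Definition End_abelian X : Prop :=
  forall e : Mor X X, e \o' e = e -> forall a : Mor X X, e \o' a = a \o' e.

Definition short_exact F M C (i : Mor F M) (d : Mor M C) : Prop :=
  [/\ mono i, epi d, is_kernel d i & is_cokernel i d].

(* Kernels/cokernels are determined up to isomorphism; the properties below
   are required of every kernel (resp. cokernel) of the given morphism. *)
Definition self_F_split F M C (i : Mor F M) (d : Mor M C) : Prop :=
  forall g : Mor M M, forall K (k : Mor K M), is_kernel (d \o' g) k -> section k.
Definition strongly_self_F_split F M C (i : Mor F M) (d : Mor M C) : Prop :=
  forall g : Mor M M, forall K (k : Mor K M), is_kernel (d \o' g) k ->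
    section k /\ fully_invariant k.
Definition dual_self_F_split F M C (i : Mor F M) (d : Mor M C) : Prop :=
  forall g : Mor M M, forall K (c : Mor M K), is_cokernel (g \o' i) c -> retraction c.
Definition dual_strongly_self_F_split F M C (i : Mor F M) (d : Mor M C) : Prop :=
  forall g : Mor M M, forall K (c : Mor M K), is_cokernel (g \o' i) c ->
    retraction c /\ fully_coinvariant c.

End Notions.

Record is_abelian (A : PreAdd) : Prop := {
  ab_zero : exists Z : Obj A, is_zero_object Z;
  ab_biprod : forall X Y : Obj A, exists P (i1 : Mor X P) (i2 : Mor Y P)
      (p1 : Mor P X) (p2 : Mor P Y), is_biproduct i1 i2 p1 p2;
  ab_ker : forall (X Y : Obj A) (f : Mor X Y), exists K (k : Mor K X), is_kernel f k;
  ab_coker : forall (X Y : Obj A) (f : Mor X Y), exists C (c : Mor Y C), is_cokernel f c;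
  ab_mono_ker : forall (K X : Obj A) (m : Mor K X), mono m ->
      exists Y (f : Mor X Y), is_kernel f m;
  ab_epi_coker : forall (X C : Obj A) (e : Mor X C), epi e ->
      exists Y (f : Mor Y X), is_cokernel f e
}.

(* Full invariance of [i] makes every endomorphism [h] of [M] induce an
   endomorphism [h'] of [C] with [d h = h' d].  A split kernel [k] of [d g]
   (with [t k = 1]) yields the idempotent [k t] of [M], which descends to an
   idempotent of [End(C)]; centrality of the idempotents of [End(C)] is exactly
   what makes all such [k] fully invariant.  Part (2) is part (1) in the
   opposite category. *)
From Stdlib Require Import Setoid.
From mathcomp Require Import all_boot all_algebra.
Set Implicit Arguments. Unset Strict Implicit. Unset Printing Implicit Defensive.
Import GRing.Theory.
Local Open Scope ring_scope.

Section Composition.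
Variable A : PreAdd.
Implicit Types X Y Z : Obj A.

Lemma comp0m X Y Z (f : Mor X Y) : (0 : Mor Y Z) \o' f = 0.
Proof. by apply: (addrI (0 \o' f)); rewrite -compDl !addr0. Qed.

Lemma compm0 X Y Z (g : Mor Y Z) : g \o' (0 : Mor X Y) = 0.
Proof. by apply: (addrI (g \o' 0)); rewrite -compDr !addr0. Qed.

Lemma compNm X Y Z (g : Mor Y Z) (f : Mor X Y) : (- g) \o' f = - (g \o' f).
Proof. by apply: (addrI (g \o' f)); rewrite -compDl !subrr comp0m. Qed.

Lemma compmN X Y Z (g : Mor Y Z) (f : Mor X Y) : g \o' (- f) = - (g \o' f).
Proof. by apply: (addrI (g \o' f)); rewrite -compDr !subrr compm0. Qed.

Lemma compBl X Y Z (g g' : Mor Y Z) (f : Mor X Y) :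
  (g - g') \o' f = g \o' f - g' \o' f.
Proof. by rewrite compDl compNm. Qed.

Lemma compBr X Y Z (g : Mor Y Z) (f f' : Mor X Y) :
  g \o' (f - f') = g \o' f - g \o' f'.
Proof. by rewrite compDr compmN. Qed.

Lemma idempotent_idmB X (e : Mor X X) :
  e \o' e = e -> (idm X - e) \o' (idm X - e) = idm X - e.
Proof. by move=> ee; rewrite !compBl !compBr !comp1m compm1 ee subrr subr0. Qed.

Lemma End_abelian_of_corner X :
  (forall e : Mor X X, e \o' e = e -> forall a, (idm X - e) \o' a \o' e = 0) ->
  End_abelian X.
Proof.
move=> corner0 e ee a.
have /eqP := corner0 e ee a; rewrite !compBl comp1m subr_eq0 => /eqP ->.
have := corner0 _ (idempotent_idmB ee) a.
have -> : idm X - (idm X - e) = e by rewrite opprB addrC subrK.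
by rewrite compBr compm1 => /eqP; rewrite subr_eq0 => /eqP.
Qed.

Lemma kernel_mono X Y K (f : Mor X Y) (k : Mor K X) : is_kernel f k -> mono k.
Proof.
move=> [fk0 k_univ] W g h kg_kh.
have fkg0 : f \o' (k \o' g) = 0 by rewrite compA fk0 comp0m.
have [u [_ u_uniq]] := k_univ W _ fkg0.
by rewrite -(u_uniq g erefl) (u_uniq h).
Qed.

End Composition.

Section SelfFSplit.
Variables (A : PreAdd) (F M C : Obj A) (i : Mor F M) (d : Mor M C).

Lemma fully_coinvariant_cokernel :
  short_exact i d -> fully_invariant i -> fully_coinvariant d.
Proof.
move=> [_ d_epi [di0 _] [_ d_univ]] [_ i_inv]; split=> // h.
have [a ha] := i_inv h.
have dhi0 : (d \o' h) \o' i = 0 by rewrite -compA ha compA di0 comp0m.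
by have [b [db _]] := d_univ _ _ dhi0; exists b.
Qed.

(* Splitting with [g = 1] gives [t i = 1]; then [1 - i t] kills [i], so it
   factors as [s d], and [d s = 1]. *)
Lemma self_F_split_retraction :
  short_exact i d -> self_F_split i d -> retraction d.
Proof.
move=> [_ d_epi ker_i [di0 d_univ]] splitF.
have [t ti1] : section i by apply: (splitF (idm M)); rewrite compm1.
have split0 : (idm M - i \o' t) \o' i = 0.
  by rewrite compBl comp1m -compA ti1 compm1 subrr.
have [s [sd _]] := d_univ _ _ split0.
exists s; apply: d_epi.
by rewrite -compA sd compBr compA di0 comp0m subr0 comp1m compm1.
Qed.

Hypothesis d_fcoinv : fully_coinvariant d.

(* [k t] induces an idempotent [e] of [C] with [g' e = 0], hence
   [d g h k = g' h' e d k = g' e h' d k = 0]. *)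
Lemma kernel_fully_invariant (g : Mor M M) K (k : Mor K M) :
  End_abelian C -> is_kernel (d \o' g) k -> section k -> fully_invariant k.
Proof.
move=> abC ker_k [t tk1]; split; first exact: kernel_mono ker_k.
case: ker_k => dgk0 k_univ; case: d_fcoinv => d_epi d_coinv => h.
have [bg dg] := d_coinv g.
have [bh dh] := d_coinv h.
have [e de] := d_coinv (k \o' t).
have dk : d \o' k = e \o' (d \o' k) by rewrite compA -de -!compA tk1 compm1.
have ee : e \o' e = e.
  by apply: d_epi; rewrite -!compA -de compA -de -!compA (compA t k) tk1 comp1m.
have bge0 : bg \o' e = 0.
  by apply: d_epi; rewrite comp0m -compA -de compA -dg compA dgk0 comp0m.
have dghk0 : d \o' g \o' (h \o' k) = 0.
  rewrite dg -!compA (compA d h) dh -compA dk !compA -(compA bg bh).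
  by rewrite -(abC e ee bh) compA bge0 !comp0m.
by have [a [ka _]] := k_univ _ _ dghk0; exists a.
Qed.

Hypothesis has_kernels :
  forall (X Y : Obj A) (f : Mor X Y), exists K (k : Mor K X), is_kernel f k.

(* With [d s = 1] and [g = s (1 - e) d], the map [s e] factors through the
   kernel [k] of [d g = (1 - e) d]; invariance of [k] under [s a d] then
   kills [(1 - e) a e]. *)
Lemma End_abelian_of_fully_invariant_kernels :
  retraction d ->
  (forall g K (k : Mor K M), is_kernel (d \o' g) k -> fully_invariant k) ->
  End_abelian C.
Proof.
move=> [s ds1] kernel_inv; apply: End_abelian_of_corner => e ee a.
set g := s \o' ((idm C - e) \o' d).
have [K [k ker_k]] := has_kernels (d \o' g).
have [_ k_inv] := kernel_inv g K k ker_k.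
have dg : d \o' g = (idm C - e) \o' d by rewrite /g compA ds1 comp1m.
rewrite dg in ker_k; case: ker_k => dgk0 k_univ.
have se0 : (idm C - e) \o' d \o' (s \o' e) = 0.
  by rewrite -compA (compA d) ds1 comp1m compBl ee comp1m subrr.
have [u [ku _]] := k_univ _ _ se0.
have [al kal] := k_inv (s \o' (a \o' d)).
have -> : (idm C - e) \o' a \o' e =
    (idm C - e) \o' d \o' (s \o' (a \o' d)) \o' k \o' u.
  by rewrite -!compA ku !(compA d s) ds1 !comp1m.
by rewrite -(compA _ _ k) kal compA dgk0 !comp0m.
Qed.

Lemma strongly_self_F_splitP :
  short_exact i d ->
  strongly_self_F_split i d <-> self_F_split i d /\ End_abelian C.
Proof.
move=> exact_id; split=> [strong | [splitF abC] g K k ker_k].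
  have splitF : self_F_split i d by move=> g K k /strong [].
  split=> //; apply: End_abelian_of_fully_invariant_kernels.
    exact: self_F_split_retraction.
  by move=> g K k /strong [].
have sec_k := splitF g K k ker_k.
by split=> //; apply: kernel_fully_invariant ker_k sec_k.
Qed.

End SelfFSplit.

Section Opposite.
Variable A : PreAdd.

Definition opposite : PreAdd := {|
  Obj := Obj A;
  Mor X Y := @Mor A Y X;
  idm := @idm A;
  comp X Y Z g f := f \o' g;
  compA X Y Z W h g f := esym (compA f g h);
  comp1m X Y f := compm1 f;
  compm1 X Y f := comp1m f;
  compDl X Y Z g g' f := compDr f g g';
  compDr X Y Z g f f' := compDl f f' g
|}.

Lemma End_abelian_opposite (X : Obj A) :
  @End_abelian opposite X <-> End_abelian X.
Proof. by split=> abX e ee a; apply/esym/abX. Qed.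

Lemma short_exact_opposite (F M C : Obj A) (i : Mor F M) (d : Mor M C) :
  short_exact i d -> @short_exact opposite C M F d i.
Proof. by case. Qed.

(* Unfolded, dual self-F-splitting of [i, d] is self-F-splitting of [d, i] in
   the opposite category, and full invariance of [i] is full coinvariance. *)
Lemma dual_strongly_self_F_splitP (F M C : Obj A) (i : Mor F M) (d : Mor M C) :
  (forall (X Y : Obj A) (f : Mor X Y),
     exists K (c : Mor Y K), is_cokernel f c) ->
  short_exact i d -> fully_invariant i ->
  dual_strongly_self_F_split i d <-> dual_self_F_split i d /\ End_abelian F.
Proof.
move=> has_cokernels exact_id i_inv.
rewrite -End_abelian_opposite.
exact: (@strongly_self_F_splitP opposite C M F d i i_inv
          (fun X Y => has_cokernels Y X) (short_exact_opposite exact_id)).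
Qed.

End Opposite.

Theorem theorem4p10 (A : PreAdd) (HA : is_abelian A) (F M C : Obj A)
    (i : Mor F M) (d : Mor M C) :
  short_exact i d -> fully_invariant i ->
  (strongly_self_F_split i d <-> self_F_split i d /\ End_abelian C) /\
  (dual_strongly_self_F_split i d <-> dual_self_F_split i d /\ End_abelian F).
Proof.
move=> exact_id i_inv; split.
  have d_fcoinv := fully_coinvariant_cokernel exact_id i_inv.
  exact: strongly_self_F_splitP d_fcoinv (ab_ker HA) exact_id.
exact: dual_strongly_self_F_splitP (ab_coker HA) exact_id i_inv.
Qed.
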